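(* Fix $S$. For an $S$-regular graph $G$ on $n$ vertices, $\lambda_B>\sqrt{\lambda_S}-o(1)$, where $o(1)$ denotes a quantity tending to $0$ as $n\to\infty$.
   Context: All graphs are simple, undirected and connected. For a $k\times k$ matrix $S=(s_{ij})$ with nonnegative integer entries, $G=(V,E)$ is $S$-regular if $V$ is partitioned into nonempty cells $V_1,\dots,V_k$ such that every vertex of $V_i$ has exactly $s_{ij}$ neighbours in $V_j$. Let $A$ be the adjacency matrix, $n=|V|>k$. The subspace $W=\mathrm{span}\{\mathbf{1}_{V_1},\dots,\mathbf{1}_{V_k}\}$ is $A$-invariant with eigenvalues on $W$ equal to those of $S$; the eigenvalues of $A$ on $W^\perp$ are the bulk eigenvalues, and $\lambda_B$ is the largest absolute value of a bulk eigenvalue. $\lambda_S$ is the largest eigenvalue of $S$. *)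

From HB Require Import structures.
From mathcomp Require Import all_boot all_order all_algebra.
From mathcomp Require Import reals.
Set Implicit Arguments. Unset Strict Implicit. Unset Printing Implicit Defensive.
Import Order.TTheory GRing.Theory Num.Theory.
Local Open Scope ring_scope.

Definition simple_connected_graph (n : nat) (e : rel 'I_n) : Prop :=
  [/\ (forall x, ~~ e x x),
      (forall x y, e x y = e y x) &
      (forall x y, connect e x y)].

(* G = (e) is S-regular w.r.t. the partition of the vertices into the cells
   V_j = cell^-1(j), j : 'I_k: every cell is nonempty and every vertex of
   V_i has exactly S i j neighbours in V_j. *)
Definition S_regular (n k : nat) (S : 'M[nat]_k) (e : rel 'I_n)
    (cell : 'I_n -> 'I_k) : Prop :=
  (forall j : 'I_k, exists x : 'I_n, cell x = j) /\
  (forall (x : 'I_n) (j : 'I_k),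
      #|[set y : 'I_n | e x y && (cell y == j)]| = S (cell x) j).

Definition adjmx (R : pzRingType) (n : nat) (e : rel 'I_n) : 'M[R]_n :=
  \matrix_(x, y) (e x y)%:R.

(* mu is a bulk eigenvalue: an eigenvalue of A on W^perp, where
   W = span{1_{V_1},...,1_{V_k}}; i.e. A v = mu v for some nonzero v
   orthogonal to every indicator vector 1_{V_j}. *)
Definition bulk_eigenvalue (R : realType) (n k : nat) (e : rel 'I_n)
    (cell : 'I_n -> 'I_k) (mu : R) : Prop :=
  exists v : 'cV[R]_n,
    [/\ v != 0,
        (forall j : 'I_k, \sum_(x : 'I_n | cell x == j) v x 0 = 0) &
        adjmx R e *m v = mu *: v].

Definition largest_eigenvalue (R : realType) (k : nat) (S : 'M[nat]_k)
    (lam : R) : Prop :=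
  eigenvalue (map_mx (fun m : nat => m%:R : R) S) lam /\
  (forall mu : R, eigenvalue (map_mx (fun m : nat => m%:R : R) S) mu ->
     mu <= lam).

From HB Require Import structures.
From mathcomp Require Import all_boot all_order all_algebra.
From mathcomp Require Import reals.
From mathcomp Require Import complex spectral lra.
Set Implicit Arguments.
Unset Strict Implicit.
Unset Printing Implicit Defensive.
Import Order.TTheory GRing.Theory Num.Theory Num.Def.
Local Open Scope ring_scope.

(* If every bulk eigenvalue has modulus at most c < sqrt(lambda_S), then every
   eigenvector of A whose eigenvalue exceeds c in modulus lies in W, so at most
   k eigenvalues of A exceed c; all of them are bounded by the sum D of the
   entries of S.  Hence tr A^(2t) <= k D^(2t) + n c^(2t).  On the other hand, a
   subeigenvector z <= 1 of S for lambda_S with z_i0 = 1, together with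
   connectivity, shows that every vertex starts at least lambda_S^t / L^k walks
   of length t >= k, where L = max(1, lambda_S), and tr A^(2t) bounds the
   number of these walks: n lambda_S^t <= L^k tr A^(2t).  For t with
   L^k c^(2t) < lambda_S^t this bounds n. *)

Lemma map_mx_exp (R K : pzRingType) (f : {rmorphism R -> K}) n (M : 'M[R]_n) m :
  map_mx f (M ^+ m) = map_mx f M ^+ m.
Proof.
elim: m => [|m IH]; first by rewrite !expr0 map_mx1.
by rewrite !exprS -!mulmxE map_mxM IH.
Qed.

Lemma exp_similar_diag (F : fieldType) n (M P : 'M[F]_n) (d : 'rV_n) m :
  P \in unitmx -> M = invmx P *m diag_mx d *m P ->
  M ^+ m = invmx P *m diag_mx (\row_i (d 0 i ^+ m)) *m P.
Proof.
move=> P_unit ->; elim: m => [|m IH].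
  rewrite expr0 (_ : diag_mx _ = 1%:M) ?mulmx1 ?mulVmx //.
  by apply/matrixP => a b; rewrite !mxE expr0.
have -> : diag_mx (\row_i (d 0 i ^+ m.+1)) =
    diag_mx d *m diag_mx (\row_i (d 0 i ^+ m)).
  by rewrite mulmx_diag; congr diag_mx; apply/rowP => j; rewrite !mxE exprS.
by rewrite exprS -mulmxE IH !mulmxA -[_ *m P *m invmx P]mulmxA mulmxV ?mulmx1.
Qed.

Lemma map_left_kernel (F K : fieldType) (f : {rmorphism F -> K}) m p
    (M : 'M[F]_(m, p)) (u : 'rV[K]_m) :
  u != 0 -> u *m map_mx f M = 0 -> exists2 v : 'rV[F]_m, v != 0 & v *m M = 0.
Proof.
move=> u_neq0 uM0.
have : ~~ row_free M.
  rewrite -(row_free_map f); apply: contra u_neq0 => M_free.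
  by rewrite -(mulmx_free_eq0 _ M_free) uM0.
rewrite -kermx_eq0 => ker_neq0; exists (nz_row (kermx M)).
  by rewrite nz_row_eq0.
by apply/sub_kermxP; exact: nz_row_sub.
Qed.

Lemma eigen_norm_le_row_sum (F : numFieldType) n (M : 'M[F]_n) (q : 'rV_n) a b :
  q != 0 -> q *m M = a *: q -> (forall x, \sum_y `|M x y| <= b) -> `|a| <= b.
Proof.
move=> /rV0Pn[y0 qy0] qM rows.
have s_gt0 : 0 < \sum_y `|q 0 y|.
  by rewrite (bigD1 y0) //= ltr_wpDr ?sumr_ge0 // normr_gt0.
rewrite -(ler_pM2r s_gt0).
have -> : `|a| * \sum_y `|q 0 y| = \sum_y `|(q *m M) 0 y|.
  by rewrite qM mulr_sumr; apply: eq_bigr => y _; rewrite !mxE normrM.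
apply: le_trans (_ : \sum_y \sum_x `|q 0 x| * `|M x y| <= _).
  apply: ler_sum => y _; rewrite mxE; apply: le_trans (ler_norm_sum _ _ _) _.
  by apply: ler_sum => x _; rewrite normrM.
rewrite exchange_big /= mulrC mulr_suml; apply: ler_sum => x _.
by rewrite -mulr_sumr ler_wpM2l.
Qed.

Lemma conj_proj_diag_ge0 (C : numClosedFieldType) n (Q P : 'M[C]_n) i :
  P *m P = P -> map_mx conjC P^T = P -> 0 <= (Q *m P *m map_mx conjC Q^T) i i.
Proof.
move=> P_idem P_adj.
have -> : Q *m P *m map_mx conjC Q^T = Q *m P *m map_mx conjC (Q *m P)^T.
  by rewrite trmx_mul map_mxM P_adj !mulmxA -[Q *m P *m P]mulmxA P_idem.
rewrite mxE; apply: sumr_ge0 => x _; rewrite !mxE; exact: mul_conjC_ge0.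
Qed.

Lemma conj_row_fixed_diag (F : fieldType) n (Q P : 'M[F]_n) i :
  Q \in unitmx -> row i Q *m P = row i Q -> (Q *m P *m invmx Q) i i = 1.
Proof.
move=> Q_unit QiP.
transitivity (row i (Q *m P *m invmx Q) 0 i); first by rewrite !mxE.
by rewrite !row_mul QiP -row_mul mulmxV // !mxE eqxx.
Qed.

Lemma eigenvalue_trmx (F : fieldType) k (M : 'M[F]_k) a :
  eigenvalue M a -> eigenvalue M^T a.
Proof.
rewrite /eigenvalue /eigenspace !kermx_eq0 !row_free_unit.
have -> : M^T - a%:M = (M - a%:M)^T by rewrite linearB /= tr_scalar_mx.
by rewrite unitmx_tr.
Qed.

(* A right eigenvector [u] of [S] gives [lam |u| <= S |u|] entrywise;
   normalize it so that its largest entry is [1]. *)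
Lemma exists_subeigenvector (R : realFieldType) k (S : 'M[nat]_k) (lam : R) :
  0 <= lam -> eigenvalue (map_mx (fun m : nat => m%:R : R) S) lam ->
  exists (z : 'I_k -> R) (i0 : 'I_k),
    [/\ forall j, z j <= 1, z i0 = 1 &
        forall j, lam * z j <= \sum_i (S j i)%:R * z i].
Proof.
move=> lam_ge0 /eigenvalue_trmx/eigenvalueP[u u_eig u_neq0].
have {}u_eig j : \sum_i (S j i)%:R * u 0 i = lam * u 0 j.
  have := congr1 (fun v : 'rV[R]_k => v 0 j) u_eig; rewrite /= !mxE => <-.
  by apply: eq_bigr => i _; rewrite !mxE mulrC.
have [j0 uj0] := rV0Pn _ u_neq0.
have [i0 _ u_max] := @arg_maxP _ R _ j0 predT (fun i => `|u 0 i|) isT.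
set m := `|u 0 i0|.
have m_gt0 : 0 < m by apply: lt_le_trans (u_max j0 isT); rewrite normr_gt0.
exists (fun j => `|u 0 j| / m), i0; split => [j||j] /=.
- by rewrite ler_pdivrMr // mul1r; exact: u_max.
- by rewrite divff ?gt_eqF.
rewrite mulrA -(ger0_norm lam_ge0) -normrM -u_eig.
under eq_bigr do rewrite mulrA.
rewrite -mulr_suml ler_wpM2r ?invr_ge0 ?(ltW m_gt0) //.
apply: le_trans (ler_norm_sum _ _ _) _.
by apply: ler_sum => i _; rewrite normrM normr_nat.
Qed.

Lemma sum_sqr_exp_le (R : realDomainType) (I : finType) (r : I -> R) (c D : R)
    k t :
  0 <= c -> (forall i, `|r i| <= D) -> (#|[set i | (c < `|r i|)%R]| <= k)%N ->
  \sum_i (r i ^+ 2) ^+ t <= k%:R * (D ^+ 2) ^+ t + #|I|%:R * (c ^+ 2) ^+ t.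
Proof.
move=> c_ge0 r_le card_le; pose J := [set i | (c < `|r i|)%R].
have sqr_exp_le i b : 0 <= b -> `|r i| <= b -> (r i ^+ 2) ^+ t <= (b ^+ 2) ^+ t.
  move=> b_ge0 rb; rewrite lerXn2r ?nnegrE ?sqr_ge0 //.
  by rewrite -real_normK ?num_real // lerXn2r ?nnegrE.
rewrite (bigID (mem J)) /=; apply: lerD.
  apply: le_trans (_ : \sum_(i in J) (D ^+ 2) ^+ t <= _).
    by apply: ler_sum => i _; apply: sqr_exp_le (le_trans _ (r_le i)) _.
  rewrite sumr_const mulr_natl.
  by apply: ler_wpMn2l; rewrite ?(exprn_ge0 _ (sqr_ge0 _)).
apply: le_trans (_ : \sum_(i | i \notin J) (c ^+ 2) ^+ t <= _).
  by apply: ler_sum => i; rewrite inE -leNgt; exact: sqr_exp_le.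
rewrite sumr_const mulr_natl.
by apply: ler_wpMn2l; rewrite ?(exprn_ge0 _ (sqr_ge0 _)) ?max_card.
Qed.

Lemma bernoulli_ineq (R : realDomainType) (x : R) t :
  0 <= x -> 1 + t%:R * x <= (1 + x) ^+ t.
Proof.
move=> x_ge0; elim: t => [|t IH]; first by rewrite expr0 mul0r addr0.
rewrite exprSr; apply: le_trans (_ : (1 + t%:R * x) * (1 + x) <= _).
  have : 0 <= t%:R * x * x by rewrite !mulr_ge0.
  by rewrite -natr1; lra.
by apply: ler_wpM2r => //; lra.
Qed.

Lemma exists_pow_gap (R : archiRealFieldType) (a q lam : R) k0 :
  0 <= q -> q < lam -> exists t, (k0 <= t)%N /\ a * q ^+ t < lam ^+ t.
Proof.
move=> q_ge0 q_lt; have lam_gt0 : 0 < lam := le_lt_trans q_ge0 q_lt.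
have [q0|q_neq0] := eqVneq q 0.
  by exists k0.+1; split; rewrite // q0 exprS mul0r mulr0 exprn_gt0.
have q_gt0 : 0 < q by rewrite lt_def q_neq0.
set x := lam / q - 1.
have x_gt0 : 0 < x by rewrite subr_gt0 ltr_pdivlMr // mul1r.
set b := archi_bound (`|a| / x).
have b_gt : `|a| / x < b%:R by apply: archi_boundP; rewrite divr_ge0 // ltW.
exists (k0 + b)%N; split; first exact: leq_addr.
have -> : lam = (1 + x) * q by rewrite /x addrC subrK divfK ?gt_eqF.
rewrite exprMn ltr_pM2r ?exprn_gt0 //.
apply: le_lt_trans (ler_norm a) (lt_le_trans _ (bernoulli_ineq _ (ltW x_gt0))).
have : `|a| < b%:R * x by rewrite -ltr_pdivrMr.
have : b%:R <= (k0 + b)%N%:R :> R by rewrite ler_nat leq_addl.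
have := ltW x_gt0; nra.
Qed.

Section CellPartition.
Variables (F : numFieldType) (n k : nat) (S : 'M[nat]_k) (e : rel 'I_n)
  (cell : 'I_n -> 'I_k).
Hypothesis e_sym : forall x y, e x y = e y x.
Hypothesis cell_surj : forall j, exists x, cell x = j.
Hypothesis cell_reg : forall x j,
  #|[set y : 'I_n | e x y && (cell y == j)]| = S (cell x) j.

Local Notation A := (adjmx F e).

Definition cell_card (j : 'I_k) : nat := #|[set x : 'I_n | cell x == j]|.

Lemma trmx_adjmx : A^T = A.
Proof. by apply/matrixP => x y; rewrite !mxE e_sym. Qed.

Lemma sum_adjmx_cell (g : 'I_k -> F) x :
  \sum_y A x y * g (cell y) = \sum_j (S (cell x) j)%:R * g j.
Proof.
rewrite (partition_big cell predT) //=; apply: eq_bigr => j _.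
rewrite -cell_reg (eq_bigr (fun y => A x y * g j)) => [|y /eqP ->] //.
rewrite -mulr_suml -sum1_card natr_sum; congr (_ * _).
rewrite big_mkcond [RHS]big_mkcond /=.
by apply: eq_bigr => y _; rewrite mxE inE andbC; case: eqP; case: (e x y).
Qed.

Lemma sum_adjmx_row x : \sum_y A x y = (\sum_j S (cell x) j)%:R.
Proof.
rewrite -(eq_bigr _ (fun y _ => mulr1 (A x y))) (sum_adjmx_cell (fun=> 1)).
by rewrite natr_sum; apply: eq_bigr => j _; rewrite mulr1.
Qed.

Lemma cell_card_neq0 j : (cell_card j)%:R != 0 :> F.
Proof.
have [x xj] := cell_surj j.
by rewrite pnatr_eq0 -lt0n; apply/card_gt0P; exists x; rewrite inE xj.
Qed.

Lemma sum_cell_const (c : F) j : \sum_(x | cell x == j) c = c *+ cell_card j.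
Proof. by rewrite -sumr_const; apply: eq_bigl => x; rewrite inE. Qed.

(* Both sides count the edges between the cells V_a and V_b. *)
Lemma cell_double_count a b :
  (S a b)%:R *+ cell_card a = (S b a)%:R *+ cell_card b :> F.
Proof.
have edges a' b' : (S a' b')%:R *+ cell_card a' =
    \sum_x \sum_y (cell x == a')%:R * (A x y * (cell y == b')%:R) :> F.
  rewrite -sum_cell_const big_mkcond /=; apply: eq_bigr => x _.
  rewrite -mulr_sumr (sum_adjmx_cell (fun j => (j == b')%:R)).
  rewrite (bigD1 b') //= eqxx mulr1 big1 => [|j /negbTE ->]; last first.
    by rewrite mulr0.
  by case: eqP => [<-|_]; rewrite ?mul1r ?mul0r ?addr0.
rewrite !edges exchange_big /=; apply: eq_bigr => y _; apply: eq_bigr => x _.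
by rewrite mulrCA [RHS]mulrCA [(cell x == a)%:R * _]mulrC !mxE e_sym.
Qed.

Definition cell_proj : 'M[F]_n :=
  \matrix_(x, y) if cell x == cell y then (cell_card (cell x))%:R^-1 else 0.

Lemma trmx_cell_proj : cell_proj^T = cell_proj.
Proof. by apply/matrixP => x y; rewrite !mxE eq_sym; case: eqP => // ->. Qed.

Lemma mul_cell_proj m (u : 'M[F]_(m, n)) i y :
  (u *m cell_proj) i y =
  (cell_card (cell y))%:R^-1 * \sum_(x | cell x == cell y) u i x.
Proof.
rewrite mxE mulr_sumr [RHS]big_mkcond /=; apply: eq_bigr => x _; rewrite mxE.
by case: eqP => [->|]; rewrite ?mulr0 // mulrC.
Qed.

Lemma cell_proj_idem : cell_proj *m cell_proj = cell_proj.
Proof.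
apply/matrixP => x y; rewrite mul_cell_proj.
rewrite (eq_bigr (fun _ => cell_proj x y)) => [|z /eqP zy]; last first.
  by rewrite !mxE zy.
rewrite sum_cell_const -[cell_proj x y *+ _]mulr_natr mulrCA.
by rewrite mulVf ?cell_card_neq0 ?mulr1.
Qed.

Lemma adjmx_cell_proj_comm : A *m cell_proj = cell_proj *m A.
Proof.
have entry x y : (A *m cell_proj) x y =
    (S (cell x) (cell y))%:R / (cell_card (cell y))%:R.
  rewrite mxE (eq_bigr (fun z => A x z * ((cell z == cell y)%:R /
      (cell_card (cell y))%:R))) => [|z _]; last first.
    by rewrite !mxE; case: eqP => [->|_]; rewrite ?mul1r ?mul0r.
  rewrite (sum_adjmx_cell (fun j => (j == cell y)%:R / _)).
  rewrite (bigD1 (cell y)) //= eqxx mul1r big1 ?addr0 // => j /negbTE ->.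
  by rewrite mul0r mulr0.
apply/matrixP => x y.
rewrite -[cell_proj *m A]trmxK trmx_mul trmx_adjmx trmx_cell_proj.
rewrite [RHS]mxE !entry.
by apply/eqP; rewrite eqr_div ?cell_card_neq0 // !mulr_natr cell_double_count.
Qed.

Lemma mxtrace_cell_proj : \tr cell_proj = k%:R.
Proof.
rewrite /mxtrace (partition_big cell predT) //= -[k in RHS]card_ord -sumr_const.
apply: eq_bigr => j _.
rewrite (eq_bigr (fun _ => (cell_card j)%:R^-1)) => [|x /eqP <-]; last first.
  by rewrite mxE eqxx.
by rewrite sum_cell_const -[_^-1 *+ _]mulr_natr mulVf ?cell_card_neq0.
Qed.

Lemma cell_proj_eq0_sum m (u : 'M[F]_(m, n)) i j : u *m cell_proj = 0 ->
  \sum_(x | cell x == j) u i x = 0.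
Proof.
have [y <-] := cell_surj j.
move=> /(congr1 (fun M : 'M[F]_(m, n) => M i y)) /eqP.
rewrite mul_cell_proj mxE mulf_eq0 invr_eq0 (negbTE (cell_card_neq0 _)).
by move/eqP.
Qed.

End CellPartition.

Lemma map_adjmx (R K : pzRingType) (f : {rmorphism R -> K}) n (e : rel 'I_n) :
  map_mx f (adjmx R e) = adjmx K e.
Proof. by apply/matrixP => x y; rewrite !mxE rmorph_nat. Qed.

Lemma map_cell_proj (F K : numFieldType) (f : {rmorphism F -> K}) n k
    (cell : 'I_n -> 'I_k) :
  map_mx f (cell_proj F cell) = cell_proj K cell.
Proof.
apply/matrixP => x y; rewrite !mxE.
by case: ifP; rewrite ?rmorph0 // fmorphV rmorph_nat.
Qed.

Definition entry_sum k (S : 'M[nat]_k) : nat := \sum_i \sum_j S i j.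

Section Spectrum.
Variables (R : realType) (n k : nat) (S : 'M[nat]_k) (e : rel 'I_n)
  (cell : 'I_n -> 'I_k).
Hypothesis e_sym : forall x y, e x y = e y x.
Hypothesis cell_surj : forall j, exists x, cell x = j.
Hypothesis cell_reg : forall x j,
  #|[set y : 'I_n | e x y && (cell y == j)]| = S (cell x) j.

Local Notation C := R[i].
Local Notation A := (adjmx R e).
Local Notation AC := (adjmx C e).
Local Notation Q := (spectralmx AC).
Local Notation d := (spectral_diag AC).

Definition adj_eigen (i : 'I_n) : R := complex.Re (d 0 i).

Lemma adjmxC_hermitian : AC \is hermsymmx.
Proof.
apply: realsym_hermsym.
  by apply/is_hermitianmxP; rewrite expr0 scale1r map_mx_id // trmx_adjmx.
by apply/mxOverP => x y; rewrite mxE realn.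
Qed.

Lemma adjmxC_spectral : AC = invmx Q *m diag_mx d *m Q.
Proof. exact/orthomx_spectralP/hermitian_normalmx/adjmxC_hermitian. Qed.

Lemma spectral_diag_adjmx i : d 0 i = (adj_eigen i)%:C%C.
Proof.
have /mxOverP/(_ 0 i) := hermitian_spectral_diag_real adjmxC_hermitian.
by move/RRe_real.
Qed.

Lemma spectral_row_eigen i : row i Q *m AC = d 0 i *: row i Q.
Proof.
rewrite -row_mul {2}adjmxC_spectral !mulmxA mulmxV ?spectral_unit // mul1mx.
by rewrite mul_diag_mx; apply/rowP => j; rewrite !mxE.
Qed.

Lemma spectral_row_neq0 i : row i Q != 0.
Proof.
have /row_unitarymxP/(_ i i) := spectral_unitarymx AC; rewrite eqxx.
by apply: contra_eq_neq => ->; rewrite dotmxE mul0mx mxE eq_sym oner_eq0.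
Qed.

Lemma mxtrace_adjmx_exp m : \tr (A ^+ m) = \sum_i adj_eigen i ^+ m.
Proof.
apply: (@complexI R); rewrite -trace_map_mx map_mx_exp map_adjmx.
rewrite (exp_similar_diag m (spectral_unit AC) adjmxC_spectral) mxtrace_mulC.
rewrite mulmxA mulmxV ?spectral_unit // mul1mx mxtrace_diag rmorph_sum.
by apply: eq_bigr => i _; rewrite mxE rmorphXn spectral_diag_adjmx.
Qed.

Lemma adj_eigen_le i : `|adj_eigen i| <= (entry_sum S)%:R.
Proof.
rewrite -lecR; apply: le_trans (normc_ge_Re _) _.
rewrite rmorph_nat; apply: eigen_norm_le_row_sum (spectral_row_neq0 i) _ _.
  exact: spectral_row_eigen.
move=> x; rewrite (eq_bigr (fun y => AC x y)) => [|y _]; last first.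
  by rewrite ger0_norm // mxE ler0n.
rewrite (sum_adjmx_row C cell_reg) ler_nat /entry_sum.
by rewrite [X in (_ <= X)%N](bigD1 (cell x)) //= leq_addr.
Qed.

Local Notation P := (cell_proj C cell).

Lemma bulk_eigenvalue_of_row (x : R) (p : 'rV[C]_n) :
  p != 0 -> p *m AC = x%:C%C *: p -> p *m P = 0 -> bulk_eigenvalue e cell x.
Proof.
move=> p_neq0 p_eig p_bulk.
have [v v_neq0] : exists2 v : 'rV[R]_n,
    v != 0 & v *m row_mx (A - x%:M) (cell_proj R cell) = 0.
  apply: (@map_left_kernel _ _ (real_complex R) _ _ _ p p_neq0).
  rewrite map_row_mx map_mxB map_scalar_mx map_adjmx map_cell_proj.
  by rewrite mul_mx_row mulmxBr p_eig mul_mx_scalar subrr p_bulk row_mx0.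
rewrite mul_mx_row => /eqP; rewrite row_mx_eq0 => /andP[/eqP vA /eqP vP].
have v_eig : v *m A = x *: v.
  by apply/eqP; rewrite -subr_eq0 -mul_mx_scalar -mulmxBr vA.
exists v^T; split.
- by apply: contra v_neq0 => /eqP/(congr1 trmx); rewrite trmxK trmx0 => ->.
- move=> j; rewrite -[RHS](cell_proj_eq0_sum cell_surj 0 j vP).
  by apply: eq_bigr => y _; rewrite mxE.
- by rewrite -(trmx_adjmx R e_sym) -trmx_mul v_eig linearZ.
Qed.

Lemma spectral_row_cell_proj (c : R) i :
  (forall mu, bulk_eigenvalue e cell mu -> `|mu| <= c) ->
  c < `|adj_eigen i| -> row i Q *m P = row i Q.
Proof.
move=> bulk_le large; set q := row i Q.
pose p := q - q *m P.
have p_eig : p *m AC = (adj_eigen i)%:C%C *: p.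
  rewrite mulmxBl -mulmxA -(adjmx_cell_proj_comm C e_sym cell_surj cell_reg).
  by rewrite mulmxA spectral_row_eigen spectral_diag_adjmx -scalemxAl scalerBr.
have p_bulk : p *m P = 0 by rewrite mulmxBl -mulmxA cell_proj_idem ?subrr.
have : p == 0.
  apply: contraLR large => p_neq0; rewrite -leNgt; apply: bulk_le.
  exact: bulk_eigenvalue_of_row p_neq0 p_eig p_bulk.
by rewrite subr_eq0 eq_sym => /eqP.
Qed.

(* In the eigenbasis [Q], the projection onto W has a nonnegative diagonal
   of trace [k], equal to [1] at each eigenvector lying in W. *)
Lemma card_large_adj_eigen (c : R) :
  (forall mu, bulk_eigenvalue e cell mu -> `|mu| <= c) ->
  (#|[set i | (c < `|adj_eigen i|)%R]| <= k)%N.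
Proof.
move=> bulk_le; set I := [set i | (c < `|adj_eigen i|)%R].
pose T i := (Q *m P *m invmx Q) i i.
have T_sum : \sum_i T i = k%:R.
  rewrite -(mxtrace_cell_proj C cell_surj) -/(mxtrace _) mxtrace_mulC.
  by rewrite mulmxA mulVmx ?spectral_unit ?mul1mx.
have T_ge0 i : 0 <= T i.
  rewrite /T invmx_unitary ?spectral_unitarymx //.
  apply: conj_proj_diag_ge0; first exact: cell_proj_idem.
  rewrite trmx_cell_proj realmxC //; apply/mxOverP => x y; rewrite mxE.
  by case: ifP; rewrite ?realV ?realn ?real0.
have T_large i : i \in I -> T i = 1.
  rewrite inE => large; apply: conj_row_fixed_diag (spectral_unit _) _.
  exact: spectral_row_cell_proj bulk_le large.
rewrite -(ler_nat C) -T_sum (bigID (mem I)) /= -sum1_card natr_sum.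
by rewrite (eq_bigr _ T_large) lerDl sumr_ge0.
Qed.

Lemma exists_bulk_eigenvalue :
  (k < n)%N -> exists mu : R, bulk_eigenvalue e cell mu.
Proof.
move=> k_lt_n; apply: boolp.contrapT => no_bulk.
have all_le (mu : R) : bulk_eigenvalue e cell mu -> `|mu| <= -1.
  by move=> bulk_mu; case: no_bulk; exists mu.
have := card_large_adj_eigen all_le.
have -> : [set i | (-1 < `|adj_eigen i|)%R] = setT.
  by apply/setP => i; rewrite !inE (lt_le_trans (ltrN10 R)).
by rewrite cardsT card_ord leqNgt k_lt_n.
Qed.

End Spectrum.

Section Walks.
Variables (R : realType) (n k : nat) (S : 'M[nat]_k) (e : rel 'I_n)
  (cell : 'I_n -> 'I_k).
Hypothesis e_sym : forall x y, e x y = e y x.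
Hypothesis e_connected : forall x y, connect e x y.
Hypothesis cell_surj : forall j, exists x, cell x = j.
Hypothesis cell_reg : forall x j,
  #|[set y : 'I_n | e x y && (cell y == j)]| = S (cell x) j.

Local Notation A := (adjmx R e).

Definition walks s x : R := \sum_y (A ^+ s) x y.

Lemma adjmx_exp_nat s x y : (A ^+ s) x y \is a Num.nat.
Proof.
elim: s x y => [|s IH] x y; first by rewrite expr0 mxE natr_nat.
rewrite exprS -mulmxE mxE; apply: rpred_sum => z _.
by rewrite rpredM // mxE natr_nat.
Qed.

Lemma trmx_adjmx_exp s : (A ^+ s)^T = A ^+ s.
Proof.
elim: s => [|s IH]; first by rewrite expr0 trmx1.
by rewrite {1}exprS exprSr -!mulmxE trmx_mul IH (trmx_adjmx R e_sym).
Qed.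

Lemma walks0 x : walks 0 x = 1.
Proof.
rewrite /walks expr0 (bigD1 x) //= mxE eqxx big1 ?addr0 // => y /negbTE y_x.
by rewrite mxE eq_sym y_x.
Qed.

Lemma walksS s x : walks s.+1 x = \sum_y A x y * walks s y.
Proof.
rewrite /walks exprS -mulmxE; under eq_bigr do rewrite mxE.
by rewrite exchange_big /=; apply: eq_bigr => y _; rewrite mulr_sumr.
Qed.

Lemma walks_ge0 s x : 0 <= walks s x.
Proof. by apply: sumr_ge0 => y _; apply/natr_ge0/adjmx_exp_nat. Qed.

Lemma walks_neighbour s x y : e x y -> walks s y <= walks s.+1 x.
Proof.
move=> exy; rewrite walksS (bigD1 y) //= mxE exy mul1r ler_wpDr //.
by apply: sumr_ge0 => z _; rewrite mulr_ge0 ?walks_ge0 // mxE ler0n.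
Qed.

(* [(A^s)_xx = sum_y (A^s)_xy^2] and the entries are natural numbers. *)
Lemma sum_walks_le_trace s : \sum_x walks s x <= \tr (A ^+ s.*2).
Proof.
rewrite /mxtrace -addnn exprD -mulmxE; apply: ler_sum => x _; rewrite mxE.
apply: ler_sum => y _; rewrite -{3}trmx_adjmx_exp mxE.
have /natrP[m ->] := adjmx_exp_nat s x y.
by rewrite -natrM ler_nat; case: m => // m; rewrite leq_pmulr.
Qed.

Variables (lam : R) (z : 'I_k -> R) (i0 : 'I_k).
Hypothesis lam_ge0 : 0 <= lam.
Hypothesis z_le1 : forall j, z j <= 1.
Hypothesis z_i0 : z i0 = 1.
Hypothesis z_sub : forall j, lam * z j <= \sum_i (S j i)%:R * z i.

Local Notation L := (Num.max 1 lam).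

Lemma walks_ge_subeigen s x : lam ^+ s * z (cell x) <= walks s x.
Proof.
elim: s x => [|s IH] x; first by rewrite walks0 expr0 mul1r.
rewrite walksS.
apply: le_trans (_ : \sum_y A x y * (lam ^+ s * z (cell y)) <= _); last first.
  by apply: ler_sum => y _; rewrite ler_wpM2l // mxE ler0n.
rewrite (sum_adjmx_cell cell_reg (fun j => lam ^+ s * z j) x).
under eq_bigr do rewrite mulrCA.
by rewrite -mulr_sumr exprSr -mulrA ler_wpM2l ?exprn_ge0.
Qed.

Definition reach_step (X : {set 'I_k}) : {set 'I_k} :=
  i0 |: (X :|: [set j | [exists i in X, (0 < S j i)%N]]).

Lemma reach_step_homo : {homo reach_step : X Y / X \subset Y}.
Proof.
move=> X Y /subsetP XY; apply/subsetP => j; rewrite !inE.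
case/orP => [->//|/orP[Xj|/existsP[i /andP[Xi Sji]]]]; apply/orP; right.
  by rewrite XY.
by apply/orP; right; apply/existsP; exists i; rewrite Sji andbT XY.
Qed.

(* A cell reached after [r] steps loses at most a factor [L] per step
   compared with [z i0 = 1]. *)
Lemma walks_ge_reach r x : cell x \in iter r reach_step set0 ->
  forall s, (r <= s)%N -> lam ^+ s <= L ^+ r * walks s x.
Proof.
have L_ge1 : 1 <= L by rewrite le_max lexx.
have L_ge0 : 0 <= L := le_trans ler01 L_ge1.
elim: r x => [|r IH] x; first by rewrite inE.
rewrite /= !inE.
case/orP=> [/eqP x_i0|/orP[x_reach|/existsP[i /andP[i_reach Si]]]] s rs.
- apply: le_trans (_ : walks s x <= _).
    by have := walks_ge_subeigen s x; rewrite x_i0 z_i0 mulr1.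
  by rewrite ler_peMl ?walks_ge0 // exprn_ege1.
- apply: le_trans (IH x x_reach s (ltnW rs)) _.
  by rewrite exprS -mulrA ler_peMl // mulr_ge0 ?exprn_ge0 ?walks_ge0.
- have : (0 < #|[set y : 'I_n | e x y && (cell y == i)]|)%N by rewrite cell_reg.
  case/card_gt0P => y; rewrite inE => /andP[exy /eqP cy].
  case: s rs => // s rs.
  have := IH y; rewrite cy => /(_ i_reach s rs) IHy.
  rewrite exprS [L ^+ r.+1]exprS -mulrA.
  apply: le_trans (_ : L * lam ^+ s <= _).
    by rewrite ler_wpM2r ?exprn_ge0 // le_max lexx orbT.
  rewrite ler_wpM2l //; apply: le_trans IHy _.
  by rewrite ler_wpM2l ?exprn_ge0 ?walks_neighbour.
Qed.

Lemma reach_all j : j \in fixset reach_step.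
Proof.
have step_fix := fixsetK reach_step_homo.
have [x <-] := cell_surj j; have [y cy] := cell_surj i0.
have /connectP[p] := e_connected x y.
elim: p x => [|w p IHp] x /=.
  by move=> _ <-; rewrite -step_fix !inE cy eqxx.
case/andP => exw ep y_last; rewrite -step_fix !inE.
apply/orP; right; apply/orP; right.
apply/existsP; exists (cell w); rewrite IHp //= -cell_reg.
by apply/card_gt0P; exists w; rewrite inE exw eqxx.
Qed.

Lemma mxtrace_adjmx_exp_ge s :
  (k <= s)%N -> n%:R * lam ^+ s <= L ^+ k * \tr (A ^+ s.*2).
Proof.
move=> ks; apply: le_trans (_ : L ^+ k * \sum_x walks s x <= _); last first.
  by rewrite ler_wpM2l ?sum_walks_le_trace // exprn_ge0 // le_max ler01.
rewrite mulr_sumr mulr_natl -[n in _ *+ n]card_ord -sumr_const.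
apply: ler_sum => x _; apply: walks_ge_reach ks.
by have := reach_all (cell x); rewrite /fixset card_ord.
Qed.

End Walks.

Lemma bulk_le_vertex_bound (R : realType) n k (S : 'M[nat]_k) (e : rel 'I_n)
    (cell : 'I_n -> 'I_k) (lam c : R) t :
  simple_connected_graph e -> S_regular S e cell ->
  eigenvalue (map_mx (fun m : nat => m%:R : R) S) lam -> 0 <= lam -> 0 <= c ->
  (forall mu, bulk_eigenvalue e cell mu -> `|mu| <= c) -> (k <= t)%N ->
  n%:R * (lam ^+ t - Num.max 1 lam ^+ k * (c ^+ 2) ^+ t) <=
    Num.max 1 lam ^+ k * (k%:R * ((entry_sum S)%:R ^+ 2) ^+ t).
Proof.
move=> [_ e_sym e_conn] [cell_surj cell_reg] lam_eig lam_ge0 c_ge0 bulk_le kt.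
have [z [i0 [z_le1 z_i0 z_sub]]] := exists_subeigenvector lam_ge0 lam_eig.
have spectrum_le := sum_sqr_exp_le t c_ge0 (adj_eigen_le R e_sym cell_reg)
  (card_large_adj_eigen e_sym cell_surj cell_reg bulk_le).
have := mxtrace_adjmx_exp_ge e_sym e_conn cell_surj cell_reg lam_ge0
  z_le1 z_i0 z_sub kt.
rewrite (mxtrace_adjmx_exp R e_sym); under eq_bigr do rewrite -mul2n exprM.
have L_ge0 : 0 <= Num.max 1 lam ^+ k by rewrite exprn_ge0 // le_max ler01.
move=> /le_trans/(_ (ler_wpM2l L_ge0 spectrum_le)); rewrite card_ord; nra.
Qed.

Lemma exists_vertex_bound (R : realType) k (S : 'M[nat]_k) (lam c : R) :
  eigenvalue (map_mx (fun m : nat => m%:R : R) S) lam -> 0 <= c ->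
  c ^+ 2 < lam ->
  exists N : nat, forall n (e : rel 'I_n) (cell : 'I_n -> 'I_k),
    simple_connected_graph e -> S_regular S e cell ->
    (forall mu, bulk_eigenvalue e cell mu -> `|mu| <= c) -> (n < N)%N.
Proof.
move=> lam_eig c_ge0 c2_lt; have lam_ge0 := le_trans (sqr_ge0 c) (ltW c2_lt).
set L := Num.max 1 lam; set D : R := (entry_sum S)%:R.
have [t [kt gap]] := exists_pow_gap (L ^+ k) k (sqr_ge0 c) c2_lt.
set delta := lam ^+ t - L ^+ k * (c ^+ 2) ^+ t.
have delta_gt0 : 0 < delta by rewrite subr_gt0.
set B := L ^+ k * (k%:R * (D ^+ 2) ^+ t).
have B_ge0 : 0 <= B / delta.
  rewrite divr_ge0 ?(ltW delta_gt0) // /B.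
  by rewrite !mulr_ge0 ?exprn_ge0 ?sqr_ge0 // le_max ler01.
exists (archi_bound (B / delta)) => n e cell G_simple G_reg bulk_le.
have := bulk_le_vertex_bound G_simple G_reg lam_eig lam_ge0 c_ge0 bulk_le kt.
rewrite -/L -/D -/delta -/B -ler_pdivlMr // => n_le.
by rewrite -(ltr_nat R); exact: le_lt_trans n_le (archi_boundP B_ge0).
Qed.

Unset Implicit Arguments.

Theorem mainTheorem12 (R : realType) (k : nat) (S : 'M[nat]_k) (lamS : R)
  (HlamS : largest_eigenvalue S lamS) :
  forall eps : R, 0 < eps ->
  exists N : nat, forall (n : nat) (e : rel 'I_n) (cell : 'I_n -> 'I_k),
    (N <= n)%N -> (k < n)%N ->
    simple_connected_graph e -> S_regular S e cell ->
    exists mu : R, bulk_eigenvalue e cell mu /\ Num.sqrt lamS - eps < `|mu|.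
Proof.
move=> eps eps_gt0; set c := Num.sqrt lamS - eps.
have [c_lt0|c_ge0] := ltP c 0.
  exists 0%N => n e cell _ kn [_ e_sym _] [cell_surj cell_reg].
  have [mu bulk_mu] := exists_bulk_eigenvalue R e_sym cell_surj cell_reg kn.
  by exists mu; split; last exact: lt_le_trans c_lt0 (normr_ge0 mu).
have sqrt_gt0 : 0 < Num.sqrt lamS by move: c_ge0; rewrite /c; lra.
have lamS_gt0 : 0 < lamS by rewrite -sqrtr_gt0.
have c2_lt : c ^+ 2 < lamS.
  rewrite -[X in _ < X]sqr_sqrtr ?ltW // ltr_sqr ?nnegrE ?sqrtr_ge0 //.
  by rewrite /c; lra.
have [N N_bound] := exists_vertex_bound HlamS.1 c_ge0 c2_lt.
exists N => n e cell Nn _ G_simple G_reg; apply: boolp.contrapT => no_large.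
suff bulk_le mu : bulk_eigenvalue e cell mu -> `|mu| <= c.
  by have := N_bound n e cell G_simple G_reg bulk_le; rewrite ltnNge Nn.
move=> bulk_mu; rewrite leNgt; apply/negP => large.
by apply: no_large; exists mu.
Qed.
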